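(* Let $\mathcal{A}$ be a finite set of arms, $1\le B\le|\mathcal{A}|$, and fix a sequence of cost functions $c_1,\dots,c_T:\mathcal{A}\to[0,1]$. For $t\ge 0$ let $a_t^{*,j}$ be the $j$-th lowest cumulative cost arm after the first $t$ rounds, i.e. ordered by $\sum_{s=1}^t c_s(a)$ with ties broken arbitrarily, and let $S_t^*:=\{a_{t-1}^{*,j}: j\in[B]\}$ be the set of the $B$ lowest cumulative cost arms at the end of round $t-1$. For $i\in\{0,\dots,T\}$ define \[R_i:=\sum_{t=1}^i c_t(S_t^* )-\min_{a^*\in\mathcal{A}}\sum_{t=1}^i c_t(a^* ),\] where $c_t(S):=\min_{a\in S}c_t(a)$. Then for each $i\in[T]$, \[R_i\le\sum_{t=1}^i\mathbb{1}[a_t^{*,1}\notin S_t^*]\quad\text{and}\quad R_i-R_{i-1}\le\mathbb{1}[a_i^{*,1}\notin S_i^*].\] *)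

From HB Require Import structures.
From mathcomp Require Import all_boot all_order all_algebra.
Set Implicit Arguments. Unset Strict Implicit. Unset Printing Implicit Defensive.
Import Order.TTheory GRing.Theory Num.Theory.
Local Open Scope ring_scope.

Definition cumcost (R : realFieldType) (A : finType) (c : nat -> A -> R)
  (t : nat) (a : A) : R := \sum_(1 <= s < t.+1) c s a.

(* Minimum of f over the set S; a0 is a witness element of S (so the
   minimum is the genuine minimum over the nonempty set S). *)
Definition minover (R : realFieldType) (A : finType) (S : {set A})
  (f : A -> R) (a0 : A) : R := \big[Num.min/f a0]_(a in S) f a.

(* ord t : 'I_#|A| -> A lists the arms in nondecreasing order of cumulative
   cost after t rounds: ord t j is the (j+1)-th lowest cumulative cost arm,
   i.e. a_t^{star,j+1}.  Ties are broken arbitrarily (ord is arbitrary subject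
   to these conditions). *)
Definition valid_order (R : realFieldType) (A : finType) (c : nat -> A -> R)
  (ord : nat -> 'I_#|A| -> A) (t : nat) : Prop :=
  injective (ord t) /\
  (forall i j : 'I_#|A|, (i <= j)%N -> cumcost c t (ord t i) <= cumcost c t (ord t j)).

Definition Sstar (A : finType) (ord : nat -> 'I_#|A| -> A) (B t : nat) : {set A} :=
  [set ord t.-1 j | j : 'I_#|A| & (j < B)%N].

Definition best (A : finType) (ord : nat -> 'I_#|A| -> A) (h : (0 < #|A|)%N)
  (t : nat) : A := ord t (Ordinal h).

Definition regret (R : realFieldType) (A : finType) (c : nat -> A -> R)
  (ord : nat -> 'I_#|A| -> A) (B : nat) (h : (0 < #|A|)%N) (i : nat) : R :=
  \sum_(1 <= t < i.+1) minover (Sstar ord B t) (c t) (best ord h t.-1)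
  - minover [set: A] (cumcost c i) (best ord h i).

From HB Require Import structures.
From mathcomp Require Import all_boot all_order all_algebra.
From mathcomp Require Import lra.
Set Implicit Arguments. Unset Strict Implicit. Unset Printing Implicit Defensive.
Import Order.TTheory GRing.Theory Num.Theory.
Local Open Scope ring_scope.

(** The regret is a telescoping sum, so it suffices to bound one increment.
    Writing [L_t] for cumulative costs and [b_t] for the leader after [t]
    rounds, [L_{k+1}(b_{k+1}) >= L_k(b_k) + c_{k+1}(b_{k+1})] because [b_k]
    minimises [L_k]; hence the increment is at most
    [c_{k+1}(S*_{k+1}) - c_{k+1}(b_{k+1})].  This is [<= 0] when
    [b_{k+1}] lies in [S*_{k+1}], and [<= 1] otherwise since costs lie in
    [[0, 1]] and [S*_{k+1}] contains [b_k]. *)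

Lemma minover_le (R : realFieldType) (A : finType) (S : {set A})
    (f : A -> R) (a0 a : A) :
  a \in S -> minover S f a0 <= f a.
Proof. by move=> aS; apply: bigmin_le_cond. Qed.

Lemma minover_sub_le_notin (R : realFieldType) (A : finType) (S : {set A})
    (f : A -> R) (a0 a : A) :
  a0 \in S -> f a0 <= 1 -> 0 <= f a -> minover S f a0 - f a <= (a \notin S)%:R.
Proof.
move=> a0S fa0_le1 fa_ge0.
have [aS | _] /= := boolP (a \in S).
  by rewrite subr_le0 minover_le.
have := minover_le f a0 a0S; lra.
Qed.

Lemma le_sum_of_increments (R : numDomainType) (u d : nat -> R) (n : nat) :
  u 0%N = 0 -> (forall k, (k < n)%N -> u k.+1 - u k <= d k.+1) ->
  u n <= \sum_(1 <= t < n.+1) d t.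
Proof.
move=> u0; elim: n => [|n IHn] step; first by rewrite u0 big_geq.
have u_le : u n <= \sum_(1 <= t < n.+1) d t.
  by apply: IHn => k kn; apply: step; apply: ltnW.
by rewrite big_nat_recr //= -[u n.+1](subrK (u n)) addrC lerD ?step.
Qed.

Section Regret.

Variables (R : realFieldType) (A : finType) (c : nat -> A -> R).
Variables (ord : nat -> 'I_#|A| -> A) (h : (0 < #|A|)%N).

Lemma cumcost0 (a : A) : cumcost c 0 a = 0.
Proof. by rewrite /cumcost big_geq. Qed.

Lemma cumcostS (t : nat) (a : A) : cumcost c t.+1 a = cumcost c t a + c t.+1 a.
Proof. by rewrite /cumcost big_nat_recr. Qed.

Lemma cumcost_best_le (t : nat) (a : A) :
  valid_order c ord t -> cumcost c t (best ord h t) <= cumcost c t a.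
Proof.
move=> [ord_inj ord_mono].
have /codomP [j ->] : a \in codom (ord t).
  by apply: inj_card_onto; rewrite ?card_ord.
exact: ord_mono.
Qed.

Lemma minover_cumcost_best (t : nat) :
  valid_order c ord t ->
  minover [set: A] (cumcost c t) (best ord h t) = cumcost c t (best ord h t).
Proof.
move=> ord_t; apply/le_anti/andP; split; first by rewrite minover_le ?in_setT.
by apply: le_bigmin => // a _; apply: cumcost_best_le.
Qed.

Lemma best_in_Sstar (B t : nat) : (0 < B)%N -> best ord h t.-1 \in Sstar ord B t.
Proof. by move=> B_gt0; apply/imsetP; exists (Ordinal h); rewrite ?inE. Qed.

Lemma regret0 (B : nat) : valid_order c ord 0 -> regret c ord B h 0 = 0.
Proof.
by move=> ord_0; rewrite /regret big_geq // minover_cumcost_best // cumcost0 subrr.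
Qed.

Lemma regretS_sub_le (B k : nat) :
  valid_order c ord k -> valid_order c ord k.+1 ->
  regret c ord B h k.+1 - regret c ord B h k <=
    minover (Sstar ord B k.+1) (c k.+1) (best ord h k) - c k.+1 (best ord h k.+1).
Proof.
move=> ord_k ord_k1.
rewrite /regret big_nat_recr //= !minover_cumcost_best // cumcostS.
have := cumcost_best_le (best ord h k.+1) ord_k.
move: (\sum_(_ <= _ < _) _) => s; lra.
Qed.

End Regret.

Theorem lemma3 (R : realFieldType) (A : finType) (B T : nat)
  (hB : (1 <= B)%N) (hBA : (B <= #|A|)%N)
  (c : nat -> A -> R)
  (hc : forall t a, (1 <= t <= T)%N -> 0 <= c t a <= 1)
  (ord : nat -> 'I_#|A| -> A)
  (hord : forall t, (t <= T)%N -> valid_order c ord t) :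
  forall i : nat, (1 <= i <= T)%N ->
    regret c ord B (leq_trans hB hBA) i <=
      \sum_(1 <= t < i.+1)
        (best ord (leq_trans hB hBA) t \notin Sstar ord B t)%:R
    /\
    regret c ord B (leq_trans hB hBA) i - regret c ord B (leq_trans hB hBA) i.-1
      <= (best ord (leq_trans hB hBA) i \notin Sstar ord B i)%:R.
Proof.
set h := leq_trans hB hBA.
have regret_step k : (k < T)%N ->
    regret c ord B h k.+1 - regret c ord B h k
      <= (best ord h k.+1 \notin Sstar ord B k.+1)%:R.
  move=> kT; have hc1 a : 0 <= c k.+1 a <= 1 by apply: hc; rewrite ltnS kT.
  apply: le_trans (regretS_sub_le _ _ (hord _ (ltnW kT)) (hord _ kT)) _.
  apply: minover_sub_le_notin; first exact: best_in_Sstar.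
    by have /andP[] := hc1 (best ord h k).
  by have /andP[] := hc1 (best ord h k.+1).
move=> [|k] /andP[// _ kT]; split; last exact: regret_step.
apply: le_sum_of_increments; first exact: regret0 (hord 0%N isT).
by move=> j jk; apply: regret_step; apply: leq_trans kT.
Qed.
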